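(* Let $u$ be a smooth solution on $[0,1]\times[0,T]$ of $$u_t=\frac{u_{xx}}{1+u_x^2}+g(x,u)\sqrt{1+u_x^2}$$ satisfying $u(0,t)-u(0,0)=u(1,t)-u(1,0)$ and $u_x(0,t)=u_x(1,t)$ for all $t\in[0,T]$, and let $F(x):=\int_0^x\arctan(t)\,dt=x\arctan x-\log\sqrt{1+x^2}$. Then there is a constant $C>0$ depending only on $\|g\|_{L^\infty}$ such that for all $t\in[0,T]$ $$\partial_t\int_0^1\sqrt{1+u_x^2}\,dx\le C\int_0^1\sqrt{1+u_x^2}\,dx,$$ $$\partial_t\int_0^1F(u_x)\,dx\le C\int_0^1(1+u_x^2)\,dx,$$ $$\partial_t\int_0^1\big(1+u_x^2\big)^{3/2}dx\le C+C\Big(\int_0^1\big(1+u_x^2\big)^{3/2}dx\Big)^3.$$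
   Context: $g\in C^\infty(\mathbb{R}^2)$ is bounded with all derivatives bounded, and 1-periodic in each variable. Subscripts denote partial derivatives. *)

From Stdlib Require Import Reals Lra ClassicalEpsilon.
Open Scope R_scope.

Definition continuous2 (f : R -> R -> R) : Prop :=
  forall x y eps, 0 < eps -> exists delta, 0 < delta /\
    forall x' y', Rabs (x' - x) < delta -> Rabs (y' - y) < delta ->
      Rabs (f x' y' - f x y) < eps.

Inductive is_pderiv (f : R -> R -> R) : (R -> R -> R) -> Prop :=
| pd_self : is_pderiv f f
| pd_x : forall h h', is_pderiv f h ->
    (forall x y, derivable_pt_lim (fun s => h s y) x (h' x y)) -> is_pderiv f h'
| pd_y : forall h h', is_pderiv f h ->
    (forall x y, derivable_pt_lim (fun s => h x s) y (h' x y)) -> is_pderiv f h'.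

Definition smooth2 (f : R -> R -> R) : Prop :=
  forall h, is_pderiv f h ->
    continuous2 h /\
    (exists hx, forall x y, derivable_pt_lim (fun s => h s y) x (hx x y)) /\
    (exists hy, forall x y, derivable_pt_lim (fun s => h x s) y (hy x y)).

Definition bounded_derivs2 (f : R -> R -> R) : Prop :=
  forall h, is_pderiv f h -> exists B, forall x y, Rabs (h x y) <= B.

Definition periodic2 (f : R -> R -> R) : Prop :=
  forall x y, f (x + 1) y = f x y /\ f x (y + 1) = f x y.

(* Riemann integral of f over [a,b] (its value when f is Riemann integrable,
   which is the case for all continuous integrands used below). *)
Definition integral (f : R -> R) (a b : R) : R :=
  epsilon (inhabits 0)
    (fun I => exists pr : Riemann_integrable f a b, RiemannInt pr = I).

(* F(x) = int_0^x arctan = x arctan x - log sqrt(1+x^2). *)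
Definition Fat (x : R) : R := x * atan x - ln (sqrt (1 + x ^ 2)).

(* Write v = sqrt (1 + u_x^2) ([arc_elem u_x]). Each quantity is an energy
   int_0^1 Phi(u_x) with Phi'' = k / v for some k >= 0. Differentiating under the
   integral, using u_xt = u_tx and integrating by parts (the boundary terms cancel
   by periodicity) gives d/dt int Phi(u_x) = - int Phi''(u_x) u_xx u_t. Inserting
   the equation u_t = u_xx / v^2 + g v and completing the square bounds the
   integrand by - k u_xx^2 / (2 v^3) + k g^2 v^3 / 2. For the length and for F the
   good first term is dropped. For v^3 it is - (3/2) int u_xx^2 / v, which absorbs
   int |(v^2)_x| <= e int u_xx^2 / v + e^-1 int v^3 (Young); since
   sup v^2 <= int v^3 + int |(v^2)_x|, this controls int v^5 <= sup v^2 int v^3,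
   and a choice of e of order 1 / (M^2 int v^3) closes the estimate cubically. *)

From Stdlib Require Import Reals Lra Psatz ClassicalEpsilon FunctionalExtensionality.
From Coquelicot Require Import Coquelicot.
Open Scope R_scope.

Lemma integral_RInt (f : R -> R) (a b : R) :
  ex_RInt f a b -> integral f a b = RInt f a b.
Proof.
  intros Hf. pose proof (ex_RInt_Reals_0 f a b Hf) as pr.
  rewrite (RInt_Reals f a b pr). unfold integral.
  destruct (epsilon_spec (inhabits 0)
    (fun I => exists pr : Riemann_integrable f a b, RiemannInt pr = I)
    (ex_intro _ _ (ex_intro _ pr eq_refl))) as [pr' <-].
  apply RiemannInt_P5.
Qed.

(** * Real functions of one variable *)

Lemma continuous_of_is_derive (f df : R -> R) (z : R) :
  (forall z, is_derive f z (df z)) -> continuous f z.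
Proof. intros Hf. apply (@ex_derive_continuous R_AbsRing R_NormedModule). eexists. apply Hf. Qed.

Lemma continuous_plus_R (f h : R -> R) (x : R) :
  continuous f x -> continuous h x -> continuous (fun y => f y + h y) x.
Proof.
  intros Hf%continuity_pt_filterlim Hh%continuity_pt_filterlim.
  apply continuity_pt_filterlim, continuity_pt_plus; assumption.
Qed.

Lemma continuous_scal_l (f : R -> R) (c x : R) :
  continuous f x -> continuous (fun y => c * f y) x.
Proof.
  intros Hf%continuity_pt_filterlim. apply continuity_pt_filterlim.
  apply continuity_pt_mult; [apply continuity_pt_const; intros ? ?; reflexivity | exact Hf].
Qed.

Lemma continuous_lin (f h : R -> R) (c d x : R) :
  continuous f x -> continuous h x -> continuous (fun y => c * f y + d * h y) x.
Proof. intros Hf Hh. apply continuous_plus_R; apply continuous_scal_l; assumption. Qed.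

Lemma continuous_Rabs_comp (f : R -> R) (x : R) :
  continuous f x -> continuous (fun y => Rabs (f y)) x.
Proof.
  intros Hf. apply (continuous_comp f Rabs); [exact Hf |].
  apply continuity_pt_filterlim, Rcontinuity_abs.
Qed.

Lemma is_derive_comp_R (f g : R -> R) (x df dg : R) :
  is_derive f (g x) df -> is_derive g x dg -> is_derive (fun y => f (g y)) x (df * dg).
Proof. intros Hf Hg. rewrite Rmult_comm. exact (is_derive_comp f g x df dg Hf Hg). Qed.

Lemma is_derive_mult_R (f g : R -> R) (x df dg : R) :
  is_derive f x df -> is_derive g x dg ->
  is_derive (fun y => f y * g y) x (df * g x + f x * dg).
Proof. intros Hf Hg. exact (is_derive_mult f g x df dg Hf Hg Rmult_comm). Qed.

Lemma derivable_pt_lim_const_on_0 (f : R -> R) (T t l : R) :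
  0 < T -> 0 <= t <= T -> (forall s, 0 <= s <= T -> f s = f 0) ->
  derivable_pt_lim f t l -> l = 0.
Proof.
  intros HT Ht Hc Hd. destruct (Req_dec l 0) as [| Hl]; [assumption | exfalso].
  destruct (Hd (Rabs l) (Rabs_pos_lt l Hl)) as [d Hdd]. pose proof (cond_pos d).
  (* a step [h] keeping [t + h] in [0, T], where the difference quotient vanishes *)
  assert (Hstep : exists h, h <> 0 /\ Rabs h < d /\ 0 <= t + h <= T).
  { set (h := Rmin (d / 2) (T / 2)).
    assert (0 < h) by (apply Rmin_pos; lra).
    assert (h <= d / 2) by apply Rmin_l. assert (h <= T / 2) by apply Rmin_r.
    destruct (Rle_or_lt (t + h) T); [exists h | exists (- h)];
      rewrite ?Rabs_Ropp, Rabs_right by lra; repeat split; lra. }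
  destruct Hstep as [h [Hh0 [Hhd Hth]]].
  specialize (Hdd h Hh0 Hhd).
  rewrite (Hc t), (Hc (t + h)), Rminus_diag, Rdiv_0_l, Rminus_0_l, Rabs_Ropp in Hdd by lra.
  lra.
Qed.

(** * Integrals *)

Lemma ex_RInt_cont (f : R -> R) (a b : R) : (forall x, continuous f x) -> ex_RInt f a b.
Proof. intros Hf. apply (@ex_RInt_continuous R_CompleteNormedModule). intros; apply Hf. Qed.

Lemma RInt_scal_l (c : R) (f : R -> R) (a b : R) :
  ex_RInt f a b -> RInt (fun x => c * f x) a b = c * RInt f a b.
Proof. exact (RInt_scal f a b c). Qed.

Lemma RInt_lin (f h : R -> R) (c d a b : R) :
  ex_RInt f a b -> ex_RInt h a b ->
  RInt (fun x => c * f x + d * h x) a b = c * RInt f a b + d * RInt h a b.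
Proof.
  intros Hf Hh. rewrite <- !RInt_scal_l by assumption.
  exact (RInt_plus (fun x => c * f x) (fun x => d * h x) a b
           (ex_RInt_scal f a b c Hf) (ex_RInt_scal h a b d Hh)).
Qed.

Lemma RInt_const_01 (c : R) : RInt (fun _ => c) 0 1 = c.
Proof. rewrite RInt_const. unfold scal; simpl; unfold mult; simpl. ring. Qed.

Lemma neg_RInt_le (f B : R -> R) (a b : R) : a <= b ->
  (forall x, continuous f x) -> (forall x, continuous B x) ->
  (forall x, a < x < b -> - f x <= B x) -> - RInt f a b <= RInt B a b.
Proof.
  intros Hab Hf HB H.
  rewrite <- (RInt_opp f) by (apply ex_RInt_cont, Hf).
  apply RInt_le; [exact Hab | | apply ex_RInt_cont, HB | exact H].
  apply ex_RInt_cont. intros x.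
  apply continuity_pt_filterlim, continuity_pt_opp, continuity_pt_filterlim, Hf.
Qed.

Lemma abs_RInt_le_RInt_abs_sub (f : R -> R) (a b c d : R) :
  a <= c -> c <= d -> d <= b -> (forall x, continuous f x) ->
  Rabs (RInt f c d) <= RInt (fun x => Rabs (f x)) a b.
Proof.
  intros Hac Hcd Hdb Hf.
  assert (Habs : forall u v, ex_RInt (fun x => Rabs (f x)) u v)
    by (intros; apply ex_RInt_cont; intros; apply continuous_Rabs_comp, Hf).
  assert (Hpos : forall u v, u <= v -> 0 <= RInt (fun x => Rabs (f x)) u v)
    by (intros; apply RInt_ge_0; [assumption | apply Habs | intros; apply Rabs_pos]).
  rewrite <- (RInt_Chasles _ a c b), <- (RInt_Chasles _ c d b) by apply Habs.
  pose proof (Hpos a c Hac); pose proof (Hpos d b Hdb).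
  pose proof (abs_RInt_le f c d Hcd (ex_RInt_cont f c d Hf)).
  unfold plus; simpl. lra.
Qed.

Lemma le_RInt_add_RInt_abs_derive (f df : R -> R) (x : R) :
  (forall y, is_derive f y (df y)) -> (forall y, continuous df y) -> 0 <= x <= 1 ->
  f x <= RInt f 0 1 + RInt (fun y => Rabs (df y)) 0 1.
Proof.
  intros Hf Hdf Hx.
  set (A := RInt (fun y => Rabs (df y)) 0 1).
  assert (Hpt : forall y, 0 <= y <= 1 -> f x <= f y + A).
  { intros y Hy.
    assert (Hftc : RInt df y x = f x - f y)
      by (apply is_RInt_unique, (is_RInt_derive f df); intros; [apply Hf | apply Hdf]).
    assert (HA : Rabs (RInt df y x) <= A).
    { destruct (Rle_or_lt y x).
      - apply abs_RInt_le_RInt_abs_sub; lra || assumption.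
      - rewrite <- (opp_RInt_swap df) by (apply ex_RInt_cont, Hdf).
        unfold opp; simpl. rewrite Rabs_Ropp.
        apply abs_RInt_le_RInt_abs_sub; lra || assumption. }
    rewrite Hftc in HA. apply Rabs_le_between in HA. lra. }
  assert (Hcf : forall y, continuous f y) by (intros; apply (continuous_of_is_derive f df), Hf).
  assert (Hcf_A : forall y, continuous (fun y => f y + A) y)
    by (intros; apply continuous_plus_R; [apply Hcf | apply continuous_const]).
  replace (RInt f 0 1 + A) with (RInt (fun y => f y + A) 0 1).
  - rewrite <- (RInt_const_01 (f x)).
    apply RInt_le; [lra | apply ex_RInt_const | apply ex_RInt_cont, Hcf_A |].
    intros; apply Hpt; lra.
  - transitivity (RInt f 0 1 + RInt (fun _ => A) 0 1); [| now rewrite RInt_const_01].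
    apply (@RInt_plus R_CompleteNormedModule); apply ex_RInt_cont; intros;
      [apply Hcf | apply continuous_const].
Qed.

(** * Functions of two variables *)

Lemma continuous2_iff (f : R -> R -> R) :
  continuous2 f <-> forall x y, continuity_2d_pt f x y.
Proof.
  split.
  - intros Hf x y eps. destruct (Hf x y eps (cond_pos eps)) as [d [Hd H]].
    exists (mkposreal d Hd). exact H.
  - intros Hf x y eps Heps. destruct (Hf x y (mkposreal eps Heps)) as [d H].
    exists d. split; [apply cond_pos | exact H].
Qed.

Lemma continuous2_swap (f : R -> R -> R) :
  continuous2 f -> continuous2 (fun x y => f y x).
Proof.
  intros Hf x y eps Heps. destruct (Hf y x eps Heps) as [d [Hd H]].
  exists d. split; [exact Hd |]. intros x' y' Hx Hy. exact (H y' x' Hy Hx).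
Qed.

Lemma continuous2_fst (f : R -> R -> R) (x y : R) :
  continuous2 f -> continuous (fun s => f s y) x.
Proof.
  intros Hf. apply continuity_pt_filterlim. intros eps Heps; simpl; unfold R_dist.
  destruct (Hf x y eps Heps) as [d [Hd H]].
  exists d. split; [exact Hd |]. intros x' [_ Hx']. apply H; [exact Hx' |].
  rewrite Rminus_diag, Rabs_R0. exact Hd.
Qed.

Lemma continuous2_comp (phi : R -> R) (f : R -> R -> R) :
  (forall z, continuous phi z) -> continuous2 f -> continuous2 (fun x y => phi (f x y)).
Proof.
  intros Hphi Hf. apply continuous2_iff. intros x y.
  apply continuity_1d_2d_pt_comp; [apply continuity_pt_filterlim, Hphi |].
  apply continuous2_iff, Hf.
Qed.

Lemma continuous2_mult (f g : R -> R -> R) :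
  continuous2 f -> continuous2 g -> continuous2 (fun x y => f x y * g x y).
Proof.
  intros Hf Hg. apply continuous2_iff. intros x y.
  apply continuity_2d_pt_mult; apply continuous2_iff; assumption.
Qed.

Lemma ex_RInt_continuous2 (K : R -> R -> R) (a b s : R) :
  continuous2 K -> ex_RInt (fun x => K x s) a b.
Proof. intros HK. apply ex_RInt_cont. intros x. apply continuous2_fst, HK. Qed.

Lemma is_derive_RInt_param_continuous2 (K dK : R -> R -> R) (a b t : R) :
  continuous2 K -> continuous2 dK ->
  (forall x s, is_derive (fun r => K x r) s (dK x s)) ->
  is_derive (fun s => RInt (fun x => K x s) a b) t (RInt (fun x => dK x t) a b).
Proof.
  intros HK HdK HD.
  assert (Hder : forall x s, Derive (fun r => K x r) s = dK x s)
    by (intros; apply is_derive_unique, HD).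
  replace (RInt (fun x => dK x t) a b) with (RInt (fun x => Derive (fun r => K x r) t) a b)
    by (apply RInt_ext; intros; apply Hder).
  apply (is_derive_RInt_param (fun s x => K x s)).
  - apply filter_forall. intros s x _. eexists. apply HD.
  - intros x _. apply continuity_2d_pt_ext with (fun s y => dK y s).
    + intros; symmetry; apply Hder.
    + apply continuous2_iff, continuous2_swap, HdK.
  - apply filter_forall. intros s. apply ex_RInt_continuous2, HK.
Qed.

Lemma mixed_partials_eq (u ux ut uxt utx : R -> R -> R) :
  (forall x t, is_derive (fun s => u s t) x (ux x t)) ->
  (forall x t, is_derive (fun s => u x s) t (ut x t)) ->
  (forall x t, is_derive (fun s => ux x s) t (uxt x t)) ->
  (forall x t, is_derive (fun s => ut s t) x (utx x t)) ->
  continuous2 uxt -> continuous2 utx ->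
  forall x t, utx x t = uxt x t.
Proof.
  intros Hux Hut Huxt Hutx Cuxt Cutx x t.
  assert (Ex : forall y, (fun z => Derive (fun s => u s z) y) = (fun z => ux y z))
    by (intros; apply functional_extensionality; intros; apply is_derive_unique, Hux).
  assert (Et : forall y, (fun z => Derive (fun s => u z s) y) = (fun z => ut z y))
    by (intros; apply functional_extensionality; intros; apply is_derive_unique, Hut).
  pose proof (Schwarz u x t) as S. rewrite Et, Ex in S.
  rewrite <- (is_derive_unique _ _ _ (Hutx x t)), <- (is_derive_unique _ _ _ (Huxt x t)).
  apply S.
  - apply locally_2d_forall. intros y s. rewrite Et, Ex.
    repeat split; eexists; eauto.
  - apply continuity_2d_pt_ext with utx.
    + intros y s. rewrite Et. symmetry. apply is_derive_unique, Hutx.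
    + apply continuous2_iff, Cutx.
  - apply continuity_2d_pt_ext with uxt.
    + intros y s. rewrite Ex. symmetry. apply is_derive_unique, Huxt.
    + apply continuous2_iff, Cuxt.
Qed.

(* [p] plays the role of [u_x], [q] of [u_xx], [w] of [u_t] and [dp] of [u_xt]. *)
Lemma is_derive_RInt_comp_periodic (Phi dPhi d2Phi : R -> R) (p q w dp : R -> R -> R)
    (a b t : R) :
  (forall z, is_derive Phi z (dPhi z)) ->
  (forall z, is_derive dPhi z (d2Phi z)) ->
  (forall z, continuous d2Phi z) ->
  continuous2 p -> continuous2 q -> continuous2 w -> continuous2 dp ->
  (forall x s, is_derive (fun y => p y s) x (q x s)) ->
  (forall x s, is_derive (fun r => p x r) s (dp x s)) ->
  (forall x, is_derive (fun y => w y t) x (dp x t)) ->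
  p a t = p b t -> w a t = w b t ->
  is_derive (fun s => RInt (fun x => Phi (p x s)) a b) t
    (- RInt (fun x => d2Phi (p x t) * q x t * w x t) a b).
Proof.
  intros DPhi D2Phi C2Phi Cp Cq Cw Cdp Dq Ddp Dw Ep Ew.
  assert (CdPhi : continuous2 (fun x s => dPhi (p x s)))
    by (apply continuous2_comp; [intros; apply (continuous_of_is_derive _ _ _ D2Phi) | exact Cp]).
  assert (CJ : continuous2 (fun x s => d2Phi (p x s) * q x s * w x s))
    by (repeat apply continuous2_mult; try apply continuous2_comp; assumption).
  assert (CL : continuous2 (fun x s => dPhi (p x s) * dp x s))
    by (apply continuous2_mult; assumption).
  assert (by_parts : RInt (fun x => d2Phi (p x t) * q x t * w x t + dPhi (p x t) * dp x t) a b
                     = dPhi (p b t) * w b t - dPhi (p a t) * w a t).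
  { apply is_RInt_unique, (is_RInt_derive (fun x => dPhi (p x t) * w x t)).
    - intros x _.
      apply (is_derive_mult_R (fun y => dPhi (p y t)) (fun y => w y t));
        [apply (is_derive_comp_R dPhi (fun y => p y t)) |]; auto.
    - intros x _. apply continuous_plus_R;
        [apply (continuous2_fst (fun x s => d2Phi (p x s) * q x s * w x s))
        | apply (continuous2_fst (fun x s => dPhi (p x s) * dp x s))]; assumption. }
  rewrite Ep, Ew, Rminus_diag in by_parts.
  assert (Hsplit : RInt (fun x => d2Phi (p x t) * q x t * w x t + dPhi (p x t) * dp x t) a b
                  = RInt (fun x => d2Phi (p x t) * q x t * w x t) a b
                    + RInt (fun x => dPhi (p x t) * dp x t) a b)
    by (apply (@RInt_plus R_CompleteNormedModule);
        [apply (ex_RInt_continuous2 (fun x s => d2Phi (p x s) * q x s * w x s))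
        | apply (ex_RInt_continuous2 (fun x s => dPhi (p x s) * dp x s))]; assumption).
  replace (- RInt (fun x => d2Phi (p x t) * q x t * w x t) a b)
    with (RInt (fun x => dPhi (p x t) * dp x t) a b) by lra.
  apply (is_derive_RInt_param_continuous2 (fun x s => Phi (p x s))
                                          (fun x s => dPhi (p x s) * dp x s)).
  - apply continuous2_comp; [intros; apply (continuous_of_is_derive _ _ _ DPhi) | exact Cp].
  - exact CL.
  - intros x s. apply (is_derive_comp_R Phi (fun r => p x r)); auto.
Qed.

(** * Pointwise inequalities *)

Lemma flow_term_le (k s q g : R) : 0 <= k -> 0 < s ->
  - (k / s * q * (q / s ^ 2 + g * s))
    <= - (k * q ^ 2 / (2 * s ^ 3)) + k * g ^ 2 * s ^ 3 / 2.
Proof.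
  intros Hk Hs.
  assert (Hsq : 0 <= k * (q + g * s ^ 3) ^ 2 / (2 * s ^ 3)).
  { apply Rdiv_le_0_compat; [apply Rmult_le_pos; [lra | apply pow2_ge_0] |].
    apply Rmult_lt_0_compat; [lra | apply pow_lt; lra]. }
  enough (k / s * q * (q / s ^ 2 + g * s)
          = k * q ^ 2 / (2 * s ^ 3) - k * g ^ 2 * s ^ 3 / 2
            + k * (q + g * s ^ 3) ^ 2 / (2 * s ^ 3)) by lra.
  field. lra.
Qed.

Lemma abs_2mul_le (p q s e : R) : Rabs p <= s -> 0 < s -> 0 < e ->
  Rabs (2 * p * q) <= e * (q ^ 2 / s) + s ^ 3 / e.
Proof.
  intros Hp Hs He.
  assert (Hq : 0 <= Rabs q) by apply Rabs_pos.
  rewrite !Rabs_mult, (Rabs_right 2), <- (pow2_abs q) by lra.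
  apply Rle_trans with (2 * s * Rabs q); [apply Rmult_le_compat_r; lra |].
  apply Rmult_le_reg_r with (e * s); [nra |].
  replace ((e * (Rabs q ^ 2 / s) + s ^ 3 / e) * (e * s))
    with (e ^ 2 * Rabs q ^ 2 + s ^ 4) by (field; lra).
  pose proof (pow2_ge_0 (e * Rabs q - s ^ 2)). nra.
Qed.

Lemma cubic_energy_bound (M E G A S D : R) :
  0 <= G -> 1 <= E -> (forall e, 0 < e -> A <= e * G + / e * E) ->
  S <= (E + A) * E -> D <= - (3 / 2) * G + 3 * M ^ 2 * S ->
  D <= 6 * (1 + M ^ 2) ^ 2 * E ^ 3.
Proof.
  intros HG HE HA HS HD.
  set (m := M ^ 2) in *. assert (Hm : 0 <= m) by apply pow2_ge_0.
  set (e := / (2 * m * E + 1)).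
  assert (He : 0 < e) by (apply Rinv_0_lt_compat; nra).
  (* with this [e], the [G] term produced by Young's inequality is absorbed by [- (3/2) G] *)
  assert (HeG : 3 * m * E * e <= 3 / 2).
  { apply Rmult_le_reg_r with (2 * m * E + 1); [nra |].
    unfold e. field_simplify; nra. }
  specialize (HA e He). unfold e in HA at 2. rewrite Rinv_inv in HA.
  assert (HAE : 3 * m * E * A <= 3 * m * E * (e * G) + 3 * m * E * ((2 * m * E + 1) * E))
    by (rewrite <- Rmult_plus_distr_l; apply Rmult_le_compat_l; nra).
  assert (3 * m * S <= 3 * m * ((E + A) * E)) by (apply Rmult_le_compat_l; lra).
  assert (6 * m * E ^ 2 <= 6 * m * E ^ 3) by (apply Rmult_le_compat_l; [lra |]; simpl; nra).
  assert (0 <= E ^ 3) by (apply pow_le; lra).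
  assert (6 * m * E ^ 3 + 6 * m ^ 2 * E ^ 3 <= 6 * (1 + m) ^ 2 * E ^ 3) by nra.
  nra.
Qed.

(** * The length element *)

Definition arc_elem (p : R) : R := sqrt (1 + p ^ 2).

Lemma arc_elem_sq (p : R) : arc_elem p ^ 2 = 1 + p ^ 2.
Proof. unfold arc_elem. rewrite pow2_sqrt; nra. Qed.

Lemma arc_elem_ge1 (p : R) : 1 <= arc_elem p.
Proof. unfold arc_elem. rewrite <- sqrt_1 at 1. apply sqrt_le_1_alt. nra. Qed.

Lemma arc_elem_pos (p : R) : 0 < arc_elem p.
Proof. pose proof (arc_elem_ge1 p). lra. Qed.

Lemma abs_le_arc_elem (p : R) : Rabs p <= arc_elem p.
Proof.
  apply Rsqr_incr_0_var; [| left; apply arc_elem_pos].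
  rewrite <- Rsqr_abs. unfold Rsqr. pose proof (arc_elem_sq p). nra.
Qed.

Lemma Rpower_arc_elem (p : R) : Rpower (1 + p ^ 2) (3 / 2) = arc_elem p ^ 3.
Proof.
  pose proof (arc_elem_sq p) as Hsq. pose proof (arc_elem_pos p).
  replace (3 / 2) with (1 + / 2) by field.
  rewrite Rpower_plus, Rpower_1, Rpower_sqrt by nra. fold (arc_elem p).
  rewrite <- Hsq. ring.
Qed.

(* [auto_derive] writes [1 + p ^ 2] as [1 + p * (p * 1)]. *)
Ltac fold_arc_elem :=
  repeat match goal with
  | |- context [sqrt (1 + ?p * (?p * 1))] =>
      replace (1 + p * (p * 1)) with (1 + p ^ 2) by ring; fold (arc_elem p);
      pose proof (arc_elem_pos p); pose proof (arc_elem_sq p)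
  end.

Ltac arc_elem_side_conditions := repeat split; try apply Rgt_not_eq; nra.

Ltac arc_elem_derive :=
  unfold arc_elem; auto_derive; fold_arc_elem;
  [arc_elem_side_conditions | field_simplify_eq; try nra].

Ltac arc_elem_continuous :=
  intros; apply (@ex_derive_continuous R_AbsRing R_NormedModule); unfold arc_elem;
  auto_derive; fold_arc_elem; arc_elem_side_conditions.

Lemma is_derive_arc_elem (p : R) : is_derive arc_elem p (p / arc_elem p).
Proof. arc_elem_derive. Qed.

Lemma is_derive_div_arc_elem (p : R) :
  is_derive (fun z => z / arc_elem z) p (/ arc_elem p ^ 3).
Proof. arc_elem_derive. Qed.

Lemma is_derive_Fat (p : R) : is_derive Fat p (atan p).
Proof.
  unfold Fat. arc_elem_derive.
  assert (p * arc_elem p ^ 2 = p * (1 + p ^ 2)) by (rewrite arc_elem_sq; ring). lra.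
Qed.

Lemma is_derive_atan_arc_elem (p : R) : is_derive atan p (/ arc_elem p ^ 2).
Proof. rewrite arc_elem_sq. auto_derive; [easy |]. field. nra. Qed.

Lemma is_derive_arc_elem_cube (p : R) :
  is_derive (fun z => arc_elem z ^ 3) p (3 * p * arc_elem p).
Proof. arc_elem_derive. Qed.

Lemma is_derive_mul_arc_elem (p : R) :
  is_derive (fun z => 3 * z * arc_elem z) p (3 * (1 + 2 * p ^ 2) / arc_elem p).
Proof. arc_elem_derive. Qed.

(** * Energy estimates along the flow *)

Definition flow_const (M : R) : R := 6 * (1 + M ^ 2) ^ 2.

Section GraphFlow.

Variables (M T t : R) (g u ux uxx ut : R -> R -> R).
Hypotheses
  (g_bound : forall x y, Rabs (g x y) <= M)
  (T_pos : 0 < T)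
  (t_range : 0 <= t <= T)
  (u_smooth : smooth2 u)
  (u_x : forall x t, derivable_pt_lim (fun s => u s t) x (ux x t))
  (u_xx : forall x t, derivable_pt_lim (fun s => ux s t) x (uxx x t))
  (u_t : forall x t, derivable_pt_lim (fun s => u x s) t (ut x t))
  (flow_eq : forall x t, 0 <= x <= 1 -> 0 <= t <= T ->
     ut x t = uxx x t / (1 + ux x t ^ 2) + g x (u x t) * sqrt (1 + ux x t ^ 2))
  (periodic_bc : forall t, 0 <= t <= T ->
     u 0 t - u 0 0 = u 1 t - u 1 0 /\ ux 0 t = ux 1 t).

Let uxt (x s : R) : R := Derive (fun r => ux x r) s.

Lemma ux_pderiv : is_pderiv u ux.
Proof. exact (pd_x u u ux (pd_self u) u_x). Qed.

Lemma ut_pderiv : is_pderiv u ut.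
Proof. exact (pd_y u u ut (pd_self u) u_t). Qed.

Lemma ux_continuous : continuous2 ux.
Proof. exact (proj1 (u_smooth ux ux_pderiv)). Qed.

Lemma uxx_continuous : continuous2 uxx.
Proof. exact (proj1 (u_smooth uxx (pd_x u ux uxx ux_pderiv u_xx))). Qed.

Lemma ut_continuous : continuous2 ut.
Proof. exact (proj1 (u_smooth ut ut_pderiv)). Qed.

Lemma uxt_is_derive (x s : R) : is_derive (fun r => ux x r) s (uxt x s).
Proof.
  apply Derive_correct. destruct (proj2 (proj2 (u_smooth ux ux_pderiv))) as [uxt' H].
  exists (uxt' x s). apply is_derive_Reals, H.
Qed.

Lemma uxt_continuous : continuous2 uxt.
Proof.
  apply (u_smooth uxt), (pd_y u ux uxt ux_pderiv).
  intros x s. apply is_derive_Reals, uxt_is_derive.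
Qed.

Lemma ut_x_is_derive (x s : R) : is_derive (fun y => ut y s) x (uxt x s).
Proof.
  destruct (proj1 (proj2 (u_smooth ut ut_pderiv))) as [utx Hutx].
  rewrite <- (mixed_partials_eq u ux ut uxt utx).
  - apply is_derive_Reals, Hutx.
  - intros; apply is_derive_Reals, u_x.
  - intros; apply is_derive_Reals, u_t.
  - exact uxt_is_derive.
  - intros; apply is_derive_Reals, Hutx.
  - exact uxt_continuous.
  - exact (proj1 (u_smooth utx (pd_x u ut utx ut_pderiv Hutx))).
Qed.

Lemma ut_periodic : ut 0 t = ut 1 t.
Proof.
  enough (ut 1 t - ut 0 t = 0) by lra.
  apply (derivable_pt_lim_const_on_0 (fun s => u 1 s - u 0 s) T t); try assumption.
  - intros s Hs. destruct (periodic_bc s Hs). lra.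
  - apply derivable_pt_lim_minus; apply u_t.
Qed.

Lemma comp_ux_continuous (h : R -> R) (s x : R) :
  (forall z, continuous h z) -> continuous (fun y => h (ux y s)) x.
Proof.
  intros Hh. apply (continuous2_fst (fun y s => h (ux y s))).
  apply continuous2_comp; [exact Hh | exact ux_continuous].
Qed.

Lemma arc_elem_pow_continuous (n : nat) (x : R) :
  continuous (fun y => arc_elem (ux y t) ^ n) x.
Proof. apply (comp_ux_continuous (fun z => arc_elem z ^ n)). arc_elem_continuous. Qed.

Lemma uxx_sq_div_continuous (x : R) :
  continuous (fun y => uxx y t ^ 2 / arc_elem (ux y t)) x.
Proof.
  apply (continuous2_fst (fun y s => uxx y s ^ 2 * / arc_elem (ux y s))).
  apply continuous2_mult;
    [apply (continuous2_comp (fun z => z ^ 2)) | apply (continuous2_comp (fun z => / arc_elem z))];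
    [arc_elem_continuous | exact uxx_continuous | arc_elem_continuous | exact ux_continuous].
Qed.

Lemma slope_sq_derive_continuous (x : R) : continuous (fun y => 2 * ux y t * uxx y t) x.
Proof.
  apply (continuous2_fst (fun y s => (2 * ux y s) * uxx y s)).
  apply continuous2_mult; [apply (continuous2_comp (fun z => 2 * z)) |];
    [arc_elem_continuous | exact ux_continuous | exact uxx_continuous].
Qed.

Lemma flow_integrand_continuous (h : R -> R) (x : R) :
  (forall z, continuous h z) -> continuous (fun y => h (ux y t) * uxx y t * ut y t) x.
Proof.
  intros Hh. apply (continuous2_fst (fun y s => h (ux y s) * uxx y s * ut y s)).
  apply continuous2_mult; [apply continuous2_mult; [apply continuous2_comp |] |];
    [exact Hh | exact ux_continuous | exact uxx_continuous | exact ut_continuous].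
Qed.

Lemma flow_energy_derivative (Phi dPhi d2Phi : R -> R) :
  (forall z, is_derive Phi z (dPhi z)) -> (forall z, is_derive dPhi z (d2Phi z)) ->
  (forall z, continuous d2Phi z) ->
  derivable_pt_lim (fun s => integral (fun x => Phi (ux x s)) 0 1) t
    (- RInt (fun x => d2Phi (ux x t) * uxx x t * ut x t) 0 1).
Proof.
  intros DPhi D2Phi C2Phi. apply is_derive_Reals.
  apply (is_derive_ext (fun s => RInt (fun x => Phi (ux x s)) 0 1)).
  { intros s. symmetry. apply integral_RInt, ex_RInt_cont. intros.
    apply comp_ux_continuous. intros; apply (continuous_of_is_derive _ _ _ DPhi). }
  apply (is_derive_RInt_comp_periodic Phi dPhi d2Phi ux uxx ut uxt); try assumption.
  - exact ux_continuous.
  - exact uxx_continuous.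
  - exact ut_continuous.
  - exact uxt_continuous.
  - intros; apply is_derive_Reals, u_xx.
  - exact uxt_is_derive.
  - intros; apply ut_x_is_derive.
  - apply periodic_bc, t_range.
  - exact ut_periodic.
Qed.

Lemma flow_integrand_le (k : R -> R) (x : R) :
  (forall z, 0 <= k z) -> 0 <= x <= 1 ->
  - (k (ux x t) / arc_elem (ux x t) * uxx x t * ut x t)
    <= - (k (ux x t) * uxx x t ^ 2 / (2 * arc_elem (ux x t) ^ 3))
       + k (ux x t) * M ^ 2 * arc_elem (ux x t) ^ 3 / 2.
Proof.
  intros Hk Hx.
  rewrite (flow_eq x t Hx t_range).
  change (sqrt (1 + ux x t ^ 2)) with (arc_elem (ux x t)).
  rewrite <- (arc_elem_sq (ux x t)).
  eapply Rle_trans; [apply flow_term_le; [apply Hk | apply arc_elem_pos] |].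
  assert (Hg : g x (u x t) ^ 2 <= M ^ 2).
  { rewrite <- (pow2_abs (g x (u x t))). pose proof (g_bound x (u x t)).
    pose proof (Rabs_pos (g x (u x t))). nra. }
  pose proof (Hk (ux x t)). pose proof (arc_elem_pos (ux x t)).
  assert (0 <= k (ux x t) * arc_elem (ux x t) ^ 3)
    by (apply Rmult_le_pos; [lra | apply pow_le; lra]).
  nra.
Qed.

Lemma flow_integrand_le_weak (k : R -> R) (x : R) :
  (forall z, 0 <= k z) -> 0 <= x <= 1 ->
  - (k (ux x t) / arc_elem (ux x t) * uxx x t * ut x t)
    <= k (ux x t) * M ^ 2 * arc_elem (ux x t) ^ 3 / 2.
Proof.
  intros Hk Hx. eapply Rle_trans; [apply flow_integrand_le; assumption |].
  enough (0 <= k (ux x t) * uxx x t ^ 2 / (2 * arc_elem (ux x t) ^ 3)) by lra.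
  pose proof (arc_elem_pos (ux x t)). apply Rdiv_le_0_compat.
  - apply Rmult_le_pos; [apply Hk | apply pow2_ge_0].
  - apply Rmult_lt_0_compat; [lra | apply pow_lt; lra].
Qed.

Lemma length_estimate :
  exists d, derivable_pt_lim (fun s => integral (fun x => sqrt (1 + ux x s ^ 2)) 0 1) t d /\
    d <= flow_const M * integral (fun x => sqrt (1 + ux x t ^ 2)) 0 1.
Proof.
  eexists; split.
  { apply (flow_energy_derivative arc_elem (fun z => z / arc_elem z) (fun z => / arc_elem z ^ 3)).
    - exact is_derive_arc_elem.
    - exact is_derive_div_arc_elem.
    - arc_elem_continuous. }
  change (fun x => sqrt (1 + ux x t ^ 2)) with (fun x => arc_elem (ux x t)).
  assert (Hcont : forall x, continuous (fun y => arc_elem (ux y t)) x)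
    by (intros; apply (comp_ux_continuous arc_elem); arc_elem_continuous).
  rewrite integral_RInt, <- RInt_scal_l by apply ex_RInt_cont, Hcont.
  apply neg_RInt_le; [lra | intros x .. | intros x Hx].
  - apply (flow_integrand_continuous (fun z => / arc_elem z ^ 3)). arc_elem_continuous.
  - apply continuous_scal_l, Hcont.
  - pose proof (arc_elem_pos (ux x t)).
    replace (/ arc_elem (ux x t) ^ 3) with (/ arc_elem (ux x t) ^ 2 / arc_elem (ux x t))
      by (field; lra).
    eapply Rle_trans.
    { apply (flow_integrand_le_weak (fun z => / arc_elem z ^ 2)); [| lra].
      intros; apply Rlt_le, Rinv_0_lt_compat, pow_lt, arc_elem_pos. }
    replace (/ arc_elem (ux x t) ^ 2 * M ^ 2 * arc_elem (ux x t) ^ 3 / 2)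
      with (M ^ 2 / 2 * arc_elem (ux x t)) by (field; lra).
    apply Rmult_le_compat_r; [lra |]. unfold flow_const. nra.
Qed.

Lemma Fat_estimate :
  exists d, derivable_pt_lim (fun s => integral (fun x => Fat (ux x s)) 0 1) t d /\
    d <= flow_const M * integral (fun x => 1 + ux x t ^ 2) 0 1.
Proof.
  eexists; split.
  { apply (flow_energy_derivative Fat atan (fun z => / arc_elem z ^ 2)).
    - exact is_derive_Fat.
    - exact is_derive_atan_arc_elem.
    - arc_elem_continuous. }
  assert (Harc : (fun x => 1 + ux x t ^ 2) = (fun x => arc_elem (ux x t) ^ 2))
    by (apply functional_extensionality; intros; symmetry; apply arc_elem_sq).
  rewrite Harc, integral_RInt, <- RInt_scal_l by apply ex_RInt_cont, arc_elem_pow_continuous.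
  apply neg_RInt_le; [lra | intros x .. | intros x Hx].
  - apply (flow_integrand_continuous (fun z => / arc_elem z ^ 2)). arc_elem_continuous.
  - apply continuous_scal_l, arc_elem_pow_continuous.
  - pose proof (arc_elem_pos (ux x t)).
    replace (/ arc_elem (ux x t) ^ 2) with (/ arc_elem (ux x t) / arc_elem (ux x t))
      by (field; lra).
    eapply Rle_trans.
    { apply (flow_integrand_le_weak (fun z => / arc_elem z)); [| lra].
      intros; apply Rlt_le, Rinv_0_lt_compat, arc_elem_pos. }
    replace (/ arc_elem (ux x t) * M ^ 2 * arc_elem (ux x t) ^ 3 / 2)
      with (M ^ 2 / 2 * arc_elem (ux x t) ^ 2) by (field; lra).
    apply Rmult_le_compat_r; [apply pow2_ge_0 |]. unfold flow_const. nra.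
Qed.

Lemma arc_elem_sq_le_energy (x : R) : 0 <= x <= 1 ->
  arc_elem (ux x t) ^ 2
    <= RInt (fun y => arc_elem (ux y t) ^ 3) 0 1
       + RInt (fun y => Rabs (2 * ux y t * uxx y t)) 0 1.
Proof.
  intros Hx.
  eapply Rle_trans;
    [apply (le_RInt_add_RInt_abs_derive (fun y => arc_elem (ux y t) ^ 2)
                                        (fun y => 2 * ux y t * uxx y t)) |].
  - intros y. apply (is_derive_ext (fun y => 1 + ux y t ^ 2));
      [intros; symmetry; apply arc_elem_sq |].
    apply (is_derive_comp_R (fun z => 1 + z ^ 2) (fun y => ux y t));
      [auto_derive; [easy | ring] | apply is_derive_Reals, u_xx].
  - exact slope_sq_derive_continuous.
  - exact Hx.
  - apply Rplus_le_compat_r, RInt_le; [lra | apply ex_RInt_cont, arc_elem_pow_continuous .. |].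
    intros y _. pose proof (arc_elem_ge1 (ux y t)). simpl. nra.
Qed.

Lemma RInt_abs_slope_sq_derive_le (e : R) : 0 < e ->
  RInt (fun y => Rabs (2 * ux y t * uxx y t)) 0 1
    <= e * RInt (fun x => uxx x t ^ 2 / arc_elem (ux x t)) 0 1
       + / e * RInt (fun x => arc_elem (ux x t) ^ 3) 0 1.
Proof.
  intros He.
  rewrite <- RInt_lin
    by apply ex_RInt_cont, uxx_sq_div_continuous || apply ex_RInt_cont, arc_elem_pow_continuous.
  apply RInt_le; [lra | | | intros x _].
  - apply ex_RInt_cont. intros. apply continuous_Rabs_comp, slope_sq_derive_continuous.
  - apply ex_RInt_cont. intros.
    apply continuous_lin; [apply uxx_sq_div_continuous | apply arc_elem_pow_continuous].
  - pose proof (arc_elem_pos (ux x t)).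
    replace (/ e * arc_elem (ux x t) ^ 3) with (arc_elem (ux x t) ^ 3 / e) by (field; lra).
    apply abs_2mul_le; [apply abs_le_arc_elem | assumption | assumption].
Qed.

Lemma RInt_arc_elem_pow5_le :
  RInt (fun x => arc_elem (ux x t) ^ 5) 0 1
    <= (RInt (fun y => arc_elem (ux y t) ^ 3) 0 1
        + RInt (fun y => Rabs (2 * ux y t * uxx y t)) 0 1)
       * RInt (fun y => arc_elem (ux y t) ^ 3) 0 1.
Proof.
  rewrite <- RInt_scal_l by apply ex_RInt_cont, arc_elem_pow_continuous.
  apply RInt_le; [lra | apply ex_RInt_cont, arc_elem_pow_continuous | | intros x Hx].
  - apply ex_RInt_cont. intros. apply continuous_scal_l, arc_elem_pow_continuous.
  - replace (arc_elem (ux x t) ^ 5) with (arc_elem (ux x t) ^ 2 * arc_elem (ux x t) ^ 3) by ring.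
    apply Rmult_le_compat_r; [apply pow_le, Rlt_le, arc_elem_pos |].
    apply arc_elem_sq_le_energy. lra.
Qed.

Lemma cube_energy_rate_le :
  - RInt (fun x => 3 * (1 + 2 * ux x t ^ 2) / arc_elem (ux x t) * uxx x t * ut x t) 0 1
    <= - (3 / 2) * RInt (fun x => uxx x t ^ 2 / arc_elem (ux x t)) 0 1
       + 3 * M ^ 2 * RInt (fun x => arc_elem (ux x t) ^ 5) 0 1.
Proof.
  rewrite <- RInt_lin
    by apply ex_RInt_cont, uxx_sq_div_continuous || apply ex_RInt_cont, arc_elem_pow_continuous.
  apply neg_RInt_le; [lra | intros x .. | intros x Hx].
  - apply (flow_integrand_continuous (fun z => 3 * (1 + 2 * z ^ 2) / arc_elem z)).
    arc_elem_continuous.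
  - apply continuous_lin; [apply uxx_sq_div_continuous | apply arc_elem_pow_continuous].
  - eapply Rle_trans; [apply (flow_integrand_le (fun z => 3 * (1 + 2 * z ^ 2))); [| lra] |].
    { intros; pose proof (pow2_ge_0 z); lra. }
    pose proof (arc_elem_sq (ux x t)). pose proof (arc_elem_ge1 (ux x t)).
    set (s := arc_elem (ux x t)) in *. set (p := ux x t) in *. set (q := uxx x t).
    assert (0 <= 3 * q ^ 2 * (s ^ 2 - 1) / (2 * s ^ 3)).
    { apply Rdiv_le_0_compat; [| apply Rmult_lt_0_compat; [lra | apply pow_lt; lra]].
      pose proof (pow2_ge_0 q). apply Rmult_le_pos; nra. }
    assert (0 <= 3 * M ^ 2 * s ^ 3 / 2) by (pose proof (pow2_ge_0 M); pose proof (pow_lt s 3); nra).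
    enough (- (3 * (1 + 2 * p ^ 2) * q ^ 2 / (2 * s ^ 3))
            + 3 * (1 + 2 * p ^ 2) * M ^ 2 * s ^ 3 / 2
            - (- (3 / 2) * (q ^ 2 / s) + 3 * M ^ 2 * s ^ 5)
            = - (3 * q ^ 2 * (s ^ 2 - 1) / (2 * s ^ 3)) - 3 * M ^ 2 * s ^ 3 / 2) by lra.
    replace (p ^ 2) with (s ^ 2 - 1) by lra. field. lra.
Qed.

Lemma cube_estimate :
  exists d, derivable_pt_lim
      (fun s => integral (fun x => Rpower (1 + ux x s ^ 2) (3 / 2)) 0 1) t d /\
    d <= flow_const M
         + flow_const M * (integral (fun x => Rpower (1 + ux x t ^ 2) (3 / 2)) 0 1) ^ 3.
Proof.
  assert (Hpow : forall s, (fun x => Rpower (1 + ux x s ^ 2) (3 / 2))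
                           = (fun x => arc_elem (ux x s) ^ 3))
    by (intros; apply functional_extensionality; intros; apply Rpower_arc_elem).
  assert (Hfun : (fun s => integral (fun x => Rpower (1 + ux x s ^ 2) (3 / 2)) 0 1)
                 = (fun s => integral (fun x => arc_elem (ux x s) ^ 3) 0 1))
    by (apply functional_extensionality; intros; rewrite Hpow; reflexivity).
  rewrite Hfun, Hpow.
  eexists; split.
  { apply (flow_energy_derivative (fun z => arc_elem z ^ 3) (fun z => 3 * z * arc_elem z)
                                  (fun z => 3 * (1 + 2 * z ^ 2) / arc_elem z)).
    - exact is_derive_arc_elem_cube.
    - exact is_derive_mul_arc_elem.
    - arc_elem_continuous. }
  rewrite integral_RInt by apply ex_RInt_cont, arc_elem_pow_continuous.
  assert (HE : 1 <= RInt (fun x => arc_elem (ux x t) ^ 3) 0 1).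
  { rewrite <- (RInt_const_01 1) at 1.
    apply RInt_le; [lra | apply ex_RInt_const | apply ex_RInt_cont, arc_elem_pow_continuous |].
    intros x _. pose proof (arc_elem_ge1 (ux x t)). simpl. nra. }
  assert (HG : 0 <= RInt (fun x => uxx x t ^ 2 / arc_elem (ux x t)) 0 1).
  { apply RInt_ge_0; [lra | apply ex_RInt_cont, uxx_sq_div_continuous |].
    intros x _. pose proof (arc_elem_pos (ux x t)).
    apply Rdiv_le_0_compat; [apply pow2_ge_0 | lra]. }
  pose proof (cubic_energy_bound M _ _ _ _ _ HG HE RInt_abs_slope_sq_derive_le
                RInt_arc_elem_pow5_le cube_energy_rate_le) as Hbound.
  fold (flow_const M) in Hbound.
  assert (0 < flow_const M) by (unfold flow_const; pose proof (pow2_ge_0 M); nra).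
  nra.
Qed.

End GraphFlow.

Theorem lemma2p15 :
  forall M : R, 0 <= M ->
  exists C : R, 0 < C /\
  forall (g : R -> R -> R) (T : R) (u ux uxx ut : R -> R -> R),
    smooth2 g -> bounded_derivs2 g -> periodic2 g ->
    (forall x y, Rabs (g x y) <= M) ->
    0 < T ->
    smooth2 u ->
    (forall x t, derivable_pt_lim (fun s => u s t) x (ux x t)) ->
    (forall x t, derivable_pt_lim (fun s => ux s t) x (uxx x t)) ->
    (forall x t, derivable_pt_lim (fun s => u x s) t (ut x t)) ->
    (forall x t, 0 <= x <= 1 -> 0 <= t <= T ->
       ut x t = uxx x t / (1 + ux x t ^ 2)
                + g x (u x t) * sqrt (1 + ux x t ^ 2)) ->
    (forall t, 0 <= t <= T ->
       u 0 t - u 0 0 = u 1 t - u 1 0 /\ ux 0 t = ux 1 t) ->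
    forall t, 0 <= t <= T ->
      (exists d, derivable_pt_lim
          (fun s => integral (fun x => sqrt (1 + ux x s ^ 2)) 0 1) t d /\
        d <= C * integral (fun x => sqrt (1 + ux x t ^ 2)) 0 1) /\
      (exists d, derivable_pt_lim
          (fun s => integral (fun x => Fat (ux x s)) 0 1) t d /\
        d <= C * integral (fun x => 1 + ux x t ^ 2) 0 1) /\
      (exists d, derivable_pt_lim
          (fun s => integral (fun x => Rpower (1 + ux x s ^ 2) (3 / 2)) 0 1) t d /\
        d <= C + C * (integral (fun x => Rpower (1 + ux x t ^ 2) (3 / 2)) 0 1) ^ 3).
Proof.
  intros M _. exists (flow_const M). split.
  { unfold flow_const. pose proof (pow2_ge_0 M). nra. }
  intros g T u ux uxx ut _ _ _ Hg HT Hu Hux Huxx Hut Hflow Hbc t Ht.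
  split; [| split].
  - exact (length_estimate M T t g u ux uxx ut Hg HT Ht Hu Hux Huxx Hut Hflow Hbc).
  - exact (Fat_estimate M T t g u ux uxx ut Hg HT Ht Hu Hux Huxx Hut Hflow Hbc).
  - exact (cube_estimate M T t g u ux uxx ut Hg HT Ht Hu Hux Huxx Hut Hflow Hbc).
Qed.
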